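(* Let $\mathbb{H}\in\{\mathbb{R},\mathbb{C}\}$ and let $A\in\mathbb{H}^{m\times d}$ have the phase retrieval property. Then the set $\mathcal{K}_A=\{|Ax|:x\in\mathbb{H}^d\}\subset\mathbb{R}^m$ is not convex.
   Context: $|Ax|$ is the vector of entrywise moduli. $A$ has the phase retrieval property if for all $x,y\in\mathbb{H}^d$, $|Ax|=|Ay|$ implies $x=cy$ for some $c\in\mathbb{H}$ with $|c|=1$. *)

From HB Require Import structures.
From mathcomp Require Import all_boot all_order all_algebra.
From mathcomp Require Import all_classical all_reals topology convex.
From mathcomp Require Import complex.
Set Implicit Arguments. Unset Strict Implicit. Unset Printing Implicit Defensive.
Import Order.TTheory GRing.Theory Num.Theory.
Local Open Scope ring_scope.
Local Open Scope classical_set_scope.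

Definition cmod (R : realType) (z : R[i]) : R := ComplexField.Normc.normc z.

Definition absAx_R (R : realType) (m d : nat) (A : 'M[R]_(m, d)) (x : 'cV[R]_d)
  : 'cV[R]_m := map_mx (fun z => `|z|) (A *m x).
Definition absAx_C (R : realType) (m d : nat) (A : 'M[R[i]]_(m, d))
  (x : 'cV[R[i]]_d) : 'cV[R]_m := map_mx (@cmod R) (A *m x).

Definition phase_retrieval_R (R : realType) (m d : nat) (A : 'M[R]_(m, d)) :=
  forall x y : 'cV[R]_d, absAx_R A x = absAx_R A y ->
    exists c : R, `|c| = 1 /\ x = c *: y.
Definition phase_retrieval_C (R : realType) (m d : nat) (A : 'M[R[i]]_(m, d)) :=
  forall x y : 'cV[R[i]]_d, absAx_C A x = absAx_C A y ->
    exists c : R[i], cmod c = 1 /\ x = c *: y.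

Definition KA_R (R : realType) (m d : nat) (A : 'M[R]_(m, d))
  : set (convex_lmodType 'cV[R]_m) := [set absAx_R A x | x in setT].
Definition KA_C (R : realType) (m d : nat) (A : 'M[R[i]]_(m, d))
  : set (convex_lmodType 'cV[R]_m) := [set absAx_C A x | x in setT].

(* Choose r, s and rows i, j with (Ar)_i = (As)_j = 0, (As)_i <> 0 <> (Ar)_j,
   such that every vector whose measurements vanish wherever those of r and s
   both vanish lies in span(r, s); such a pair is reached by enlarging the
   common zero set of the measurements as long as possible.  If K_A were
   convex, then |Aw| would be the midpoint of |A(r + s)| and |A(r - s)| (real
   case), resp. of |2Ar| and |2As| (complex case), for some w.  Then w vanishes
   on the common zeros, so w = a r + b s, and rows i and j give |a| = |b| = 1.
   In the real case a, b = +-1 forces |A(r + s)| = |A(r - s)|.  In the complex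
   case |a(Ar)_k + b(As)_k| = |(Ar)_k| + |(As)_k| aligns a(Ar)_k with b(As)_k,
   so rotating the second by 'i gives |A(ar + 'i b s)| = |A(ar - 'i b s)|.
   Rows i and j show that neither pair consists of unimodular multiples of
   each other, contradicting phase retrieval. *)

From HB Require Import structures.
From mathcomp Require Import all_boot all_order all_algebra.
From mathcomp Require Import all_classical all_reals topology convex.
From mathcomp Require Import complex interval_inference lra.
Set Implicit Arguments. Unset Strict Implicit. Unset Printing Implicit Defensive.
Import Order.TTheory GRing.Theory Num.Theory.
Local Open Scope ring_scope.

Section Separation.
Variables (F : fieldType) (m d : nat) (A : 'M[F]_(m, d)).
Implicit Types (r s u v w : 'cV[F]_d) (i j k l : 'I_m).

Definition meas w k := (A *m w) k 0.

Lemma measD u v k : meas (u + v) k = meas u k + meas v k.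
Proof. by rewrite /meas mulmxDr !mxE. Qed.

Lemma measB u v k : meas (u - v) k = meas u k - meas v k.
Proof. by rewrite /meas mulmxBr !mxE. Qed.

Lemma measZ a u k : meas (a *: u) k = a * meas u k.
Proof. by rewrite /meas -scalemxAr mxE. Qed.

Definition common_zeros r s : {set 'I_m} :=
  [set k | (meas r k == 0) && (meas s k == 0)].

Definition saturated r s := forall w,
  (forall k, meas r k = 0 -> meas s k = 0 -> meas w k = 0) ->
  exists a b, w = a *: r + b *: s.

Definition separated_by r s i j :=
  [/\ meas r i = 0, meas s i != 0, meas r j != 0 & meas s j = 0].

Definition eliminate v u l := u - (meas u l / meas v l) *: v.

Lemma meas_eliminate v u l k :
  meas (eliminate v u l) k = meas u k - meas u l / meas v l * meas v k.
Proof. by rewrite measB measZ. Qed.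

Lemma separated_by_eliminate u v k l :
  meas u k != 0 -> meas v k = 0 -> meas v l != 0 ->
  separated_by (eliminate v u l) v l k /\
  common_zeros (eliminate v u l) v = common_zeros u v.
Proof.
move=> uk vk vl; split.
  by split; rewrite ?meas_eliminate ?divfK ?subrr ?vk ?mulr0 ?subr0.
apply/setP => n; rewrite !inE meas_eliminate.
by have [->|] := eqVneq (meas v n) 0; rewrite ?mulr0 ?subr0 ?andbF.
Qed.

Hypothesis A_inj : forall w, A *m w = 0 -> w = 0.

Lemma meas_neq0 w : w != 0 -> exists k, meas w k != 0.
Proof.
move=> w0; have [k|meas0] := pickP (fun k => meas w k != 0); first by exists k.
case/eqP: w0; apply: A_inj; apply/matrixP => k l.
by rewrite ord1 [RHS]mxE; apply/eqP/negbFE; exact: meas0.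
Qed.

Lemma exists_separated_by : (2 <= d)%N -> exists r s i j, separated_by r s i j.
Proof.
move=> d2; pose e0 : 'cV[F]_d := delta_mx (Ordinal (ltnW d2)) 0.
pose e1 : 'cV[F]_d := delta_mx (Ordinal d2) 0.
have [k e0k] : exists k, meas e0 k != 0.
  apply: meas_neq0; apply/eqP => /matrixP/(_ (Ordinal (ltnW d2)) 0).
  by rewrite !mxE !eqxx; apply/eqP; exact: oner_neq0.
pose v := eliminate e0 e1 k.
have vk : meas v k = 0 by rewrite meas_eliminate divfK ?subrr.
have [l vl] : exists l, meas v l != 0.
  apply: meas_neq0; apply/eqP => /matrixP/(_ (Ordinal d2) 0).
  by rewrite !mxE !eqxx /= mulr0 subr0; apply/eqP; exact: oner_neq0.
by exists (eliminate v e0 l), v, l, k; case: (separated_by_eliminate e0k vk vl).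
Qed.

(* The part of [w] outside [span(r, s)] vanishes on rows [i] and [j]; a row
   where it does not vanish enlarges the common zero set by [i]. *)
Lemma separated_by_unsaturated r s i j :
  separated_by r s i j -> ~ saturated r s ->
  exists r' s' i' j', separated_by r' s' i' j' /\
    common_zeros r s \proper common_zeros r' s'.
Proof.
case=> ri si rj sj /existsNP [w /not_implyP [wZ w_out]].
pose w' := w - (meas w j / meas r j) *: r - (meas w i / meas s i) *: s.
have w'E n : meas w' n =
    meas w n - meas w j / meas r j * meas r n - meas w i / meas s i * meas s n.
  by rewrite !measB !measZ.
have w'i : meas w' i = 0 by rewrite w'E ri mulr0 subr0 divfK ?subrr.
have w'j : meas w' j = 0 by rewrite w'E sj mulr0 subr0 divfK ?subrr.
have w'0 : w' != 0.
  apply/eqP => w'0; apply: w_out.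
  exists (meas w j / meas r j), (meas w i / meas s i).
  by apply/eqP; rewrite -subr_eq0 opprD addrA -/w' w'0.
have [k w'k] := meas_neq0 w'0.
have [sep zerosE] := separated_by_eliminate rj w'j w'k.
exists (eliminate w' r k), w', k, j; split => //; rewrite zerosE.
apply/fintype.properP; split.
  apply/fintype.subsetP => n; rewrite !inE => /andP[/eqP rn /eqP sn].
  by rewrite w'E rn sn wZ // !mulr0 !subr0 eqxx.
by exists i; rewrite !inE ?ri ?w'i ?eqxx // (negbTE si) andbF.
Qed.

Lemma exists_saturated_separated_by :
  (2 <= d)%N -> exists r s i j, separated_by r s i j /\ saturated r s.
Proof.
move=> /exists_separated_by [r [s [i [j sep]]]].
have [n] := ubnP (m - #|common_zeros r s|).
elim: n r s i j sep => // n IH r s i j sep lt_n.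
have [sat|unsat] := pselect (saturated r s); first by exists r, s, i, j.
have [r' [s' [i' [j' [sep' lt_zeros]]]]] := separated_by_unsaturated sep unsat.
apply: (IH r' s' i' j' sep'); rewrite ltnS in lt_n; apply: leq_trans lt_n.
have le_zeros_m : (#|common_zeros r' s'| <= m)%N.
  by rewrite -[X in (_ <= X)%N]card_ord max_card.
have lt_card := proper_card lt_zeros.
exact: ltn_sub2l (leq_trans lt_card le_zeros_m) lt_card.
Qed.

End Separation.

Section PhaseRetrieval.
Variables (C : numFieldType) (m d : nat) (A : 'M[C]_(m, d)).
Implicit Types (r s w x y : 'cV[C]_d) (i j k : 'I_m).

Definition absmx x : 'cV[C]_m := map_mx Num.norm (A *m x).

Lemma absmxE x k : absmx x k 0 = `|meas A x k|.
Proof. by rewrite mxE. Qed.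

Definition phase_retrieval :=
  forall x y, absmx x = absmx y -> exists c, `|c| = 1 /\ x = c *: y.

Lemma separated_by_unit_coords r s i j w :
  separated_by A r s i j -> saturated A r s ->
  (forall k, meas A r k = 0 -> meas A s k = 0 -> meas A w k = 0) ->
  `|meas A w i| = `|meas A s i| -> `|meas A w j| = `|meas A r j| ->
  exists a b, [/\ `|a| = 1, `|b| = 1 & w = a *: r + b *: s].
Proof.
case=> ri si rj sj /[apply] -[a [b wE]]; rewrite wE !measD !measZ ri sj.
rewrite !mulr0 add0r addr0 !normrM => wi wj; exists a, b; split => //.
  by apply: (mulIf (_ : `|meas A r j| != 0)); rewrite ?normr_eq0 ?mul1r.
by apply: (mulIf (_ : `|meas A s i| != 0)); rewrite ?normr_eq0 ?mul1r.
Qed.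

Hypothesis PR : phase_retrieval.

Lemma phase_retrieval_ker x : A *m x = 0 -> x = 0.
Proof.
move=> Ax0; have [c [_ ->]] : exists c, `|c| = 1 /\ x = c *: 0.
  by apply: PR; rewrite /absmx Ax0 mulmx0.
by rewrite scaler0.
Qed.

(* Row [i] forces the factor to be [-1]; row [j] then forces [a (Ar)_j = 0]. *)
Lemma separated_by_absmx_neq r s i j a b :
  separated_by A r s i j -> a != 0 -> b != 0 ->
  absmx (a *: r + b *: s) != absmx (a *: r - b *: s).
Proof.
case=> ri si rj sj a0 b0; apply/eqP => /PR [c [_ E]].
have rowE k :
    a * meas A r k + b * meas A s k = c * (a * meas A r k - b * meas A s k).
  by have := congr1 (meas A ^~ k) E; rewrite measZ measD measB !measZ.
have c_eqN1 : c = -1.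
  have := rowE i; rewrite ri !mulr0 add0r sub0r mulrN => /eqP.
  rewrite -subr_eq0 opprK -{1}[b * _]mul1r -mulrDl mulf_eq0.
  by rewrite (negbTE (mulf_neq0 b0 si)) orbF addrC addr_eq0 => /eqP.
have := rowE j; rewrite sj !mulr0 addr0 subr0 c_eqN1 mulN1r => /eqP.
by rewrite -subr_eq0 opprK -mulr2n mulrn_eq0 /= mulf_eq0 (negbTE a0) (negbTE rj).
Qed.

End PhaseRetrieval.

Lemma convex_set_midpoint (R : realFieldType) n
    (S : set (convex_lmodType 'cV[R]_n)) u v :
  convex_set S -> u \in S -> v \in S ->
  exists2 w, S w & forall k, 2 * w k 0 = u k 0 + v k 0.
Proof.
have half_ge0 : (0 : R) <= 2^-1 by rewrite invr_ge0.
have half_le1 : (2 : R)^-1 <= 1 by rewrite invf_le1 ?ler1n.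
move=> /(_ u v (Itv01 half_ge0 half_le1)) /[apply] /[apply] /set_mem Sw.
eexists; first exact: Sw.
move=> k; rewrite /= !mxE /= /unstable.onem; lra.
Qed.

Section RealCase.
Variables (R : realType) (m d : nat) (A : 'M[R]_(m, d)).

Lemma KA_R_midpoint x y : convex_set (KA_R A) ->
  exists w, forall k, 2 * `|meas A w k| = `|meas A x k| + `|meas A y k|.
Proof.
have mem z : absAx_R A z \in KA_R A by rewrite inE; exists z.
move=> /convex_set_midpoint /(_ (mem x) (mem y)) [_ [w _ <-] wE].
by exists w => k; have := wE k; rewrite ![absAx_R A _ k 0]mxE.
Qed.

Lemma signed_sum_midpoint (a b p q : R) : `|a| = 1 -> `|b| = 1 ->
  2 * `|a * p + b * q| = `|p + q| + `|p - q| -> `|p + q| = `|p - q|.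
Proof.
have pqN : `|- p + q| = `|p - q| by rewrite addrC -opprB normrN.
have pqNN : `|- p - q| = `|p + q| by rewrite -opprD normrN.
move=> /eqP + /eqP; rewrite !eqr_norml.
by move=> /andP[/orP[]/eqP-> _] /andP[/orP[]/eqP-> _];
  rewrite ?mul1r ?mulN1r ?pqN ?pqNN; lra.
Qed.

Lemma real_not_convex :
  (2 <= d)%N -> phase_retrieval_R A -> ~ convex_set (KA_R A).
Proof.
move=> d2 PR cvx; have PR' : phase_retrieval A := PR.
have [r [s [i [j [sep sat]]]]] :=
  exists_saturated_separated_by (phase_retrieval_ker PR') d2.
have [ri si rj sj] := sep.
have [w wE] := KA_R_midpoint (r + s) (r - s) cvx.
have {}wE k : 2 * `|meas A w k| =
    `|meas A r k + meas A s k| + `|meas A r k - meas A s k|.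
  by rewrite wE measD measB.
have [a [b [a1 b1 wab]]] :
    exists a b, [/\ `|a| = 1, `|b| = 1 & w = a *: r + b *: s].
  apply: separated_by_unit_coords sep sat _ _ _.
  - move=> k rk sk; apply/normr0_eq0; move: (wE k).
    by rewrite rk sk subrr addr0 normr0; lra.
  - by move: (wE i); rewrite ri add0r sub0r normrN; lra.
  - by move: (wE j); rewrite sj addr0 subr0; lra.
have := separated_by_absmx_neq PR' sep (oner_neq0 R) (oner_neq0 R).
rewrite !scale1r => /eqP; apply; apply/matrixP => k l.
rewrite ord1 !absmxE measD measB.
by apply: signed_sum_midpoint a1 b1 _; rewrite -wE wab measD !measZ.
Qed.

End RealCase.

Lemma normC_rotate_eq (C : numClosedFieldType) (x y : C) :
  `|x + y| = `|x| + `|y| -> `|x + 'i * y| = `|x - 'i * y|.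
Proof.
case/normCDeq => t _ [-> ->]; rewrite !mulrA -mulrDl -mulrBl !normrM -mulrN.
by rewrite !normC_rect ?rpredN ?normr_real // sqrrN.
Qed.

Section ComplexCase.
Variables (R : realType) (m d : nat) (A : 'M[R[i]]_(m, d)).

Lemma real_complex_cmod (z : R[i]) : ((cmod z)%:C)%C = `|z|.
Proof. by case: z => a b; rewrite normc_def. Qed.

Lemma absAx_C_absmx x : map_mx (real_complex R) (absAx_C A x) = absmx A x.
Proof. by apply/matrixP => k l; rewrite !mxE real_complex_cmod. Qed.

Lemma phase_retrieval_C_absmx : phase_retrieval_C A -> phase_retrieval A.
Proof.
move=> PR x y; rewrite -!absAx_C_absmx => /map_mx_inj /PR [c [c1 ->]].
by exists c; rewrite -real_complex_cmod c1.
Qed.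

Lemma KA_C_midpoint x y : convex_set (KA_C A) ->
  exists w, forall k, 2 * `|meas A w k| = `|meas A x k| + `|meas A y k|.
Proof.
have mem z : absAx_C A z \in KA_C A by rewrite inE; exists z.
move=> /convex_set_midpoint /(_ (mem x) (mem y)) [_ [w _ <-] wE].
exists w => k; have := congr1 (real_complex R) (wE k).
by rewrite ![absAx_C A _ k 0]mxE rmorphD rmorphM rmorph_nat /= !real_complex_cmod.
Qed.

Lemma complex_not_convex :
  (2 <= d)%N -> phase_retrieval_C A -> ~ convex_set (KA_C A).
Proof.
move=> d2 /phase_retrieval_C_absmx PR cvx.
have [r [s [i [j [sep sat]]]]] :=
  exists_saturated_separated_by (phase_retrieval_ker PR) d2.
have [ri si rj sj] := sep.
have [w wE] := KA_C_midpoint r s cvx.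
have {}wE k : `|meas A (2 *: w) k| = `|meas A r k| + `|meas A s k|.
  by rewrite measZ normrM normr_nat wE.
have [a [b [a1 b1 wab]]] :
    exists a b, [/\ `|a| = 1, `|b| = 1 & 2 *: w = a *: r + b *: s].
  apply: separated_by_unit_coords sep sat _ _ _.
  - by move=> k rk sk; apply/normr0_eq0; rewrite wE rk sk normr0 addr0.
  - by rewrite wE ri normr0 add0r.
  - by rewrite wE sj normr0 addr0.
have a0 : a != 0 by rewrite -normr_eq0 a1 oner_neq0.
have ib0 : 'i * b != 0 by rewrite mulf_neq0 ?neq0Ci // -normr_eq0 b1 oner_neq0.
have /eqP := separated_by_absmx_neq PR sep a0 ib0; apply.
apply/matrixP => k l; rewrite ord1 !absmxE measD measB !measZ -!mulrA.
by apply: normC_rotate_eq; rewrite !normrM a1 b1 !mul1r -wE wab measD !measZ.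
Qed.

End ComplexCase.

Theorem lemma3p2 (R : realType) :
  (forall (m d : nat) (A : 'M[R]_(m, d)),
      (2 <= d)%N -> phase_retrieval_R A -> ~ convex_set (KA_R A)) /\
  (forall (m d : nat) (A : 'M[R[i]]_(m, d)),
      (2 <= d)%N -> phase_retrieval_C A -> ~ convex_set (KA_C A)).
Proof. by split=> m d A; [exact: real_not_convex | exact: complex_not_convex]. Qed.
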